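(* Let $d\ge2$, $y_1,y_2\in\mathbb{S}^{d-1}$ and $0<r_1,r_2<\frac12$. For $i=1,2$ let $B_i$ be the open ball of radius $r_i$ centered at $(1-r_i)y_i$ (internally tangent to $\mathbb{S}^{d-1}$ at $y_i$). If $x\in B_1$ and $x\notin B_2$, then $$\frac{|x-y_1|}{|x-y_2|}\ \le\ \left(\frac{r_1}{r_2}\cdot\frac{1-r_2}{1-r_1}\right)^{1/2}.$$
   Context: $\mathbb{S}^{d-1}$ is the unit sphere of $\mathbb R^d$; $|\cdot|$ is the Euclidean norm. *)

From mathcomp Require Import all_boot all_order all_algebra.
Set Implicit Arguments. Unset Strict Implicit. Unset Printing Implicit Defensive.
Import Order.TTheory GRing.Theory Num.Theory.
Local Open Scope ring_scope.

Definition dotv (R : rcfType) (d : nat) (u v : 'rV[R]_d) : R :=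
  \sum_(i < d) u ord0 i * v ord0 i.
Definition enorm (R : rcfType) (d : nat) (u : 'rV[R]_d) : R :=
  Num.sqrt (dotv u u).

Definition in_open_ball (R : rcfType) (d : nat) (c : 'rV[R]_d) (r : R) (x : 'rV[R]_d) : Prop :=
  enorm (x - c) < r.

From mathcomp Require Import all_boot all_order all_algebra.
From mathcomp Require Import ring lra.
Import Order.TTheory GRing.Theory Num.Theory.
Local Open Scope ring_scope.

(* For a unit vector y, the ball B of radius r centred at (1 - r) y satisfies the
   power-of-a-point identity |x - (1 - r) y|^2 - r^2 = (1 - r) |x - y|^2 - r (1 - |x|^2),
   so x lies in B iff (1 - r) |x - y|^2 < r (1 - |x|^2).  Writing this for x in B1 and
   its negation for x outside B2, eliminating 1 - |x|^2 between the two leaves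
   |x - y1|^2 <= r1 (1 - r2) / (r2 (1 - r1)) |x - y2|^2. *)

Section EuclideanNorm.
Context {R : rcfType} {d : nat}.
Implicit Types (x y u : 'rV[R]_d) (k r : R).

Lemma enorm_ge0 u : 0 <= enorm u.
Proof. exact: sqrtr_ge0. Qed.

Lemma dotvv_ge0 u : 0 <= dotv u u.
Proof. by apply: sumr_ge0 => i _; rewrite -expr2 sqr_ge0. Qed.

Lemma sqr_enorm u : enorm u ^+ 2 = dotv u u.
Proof. by rewrite sqr_sqrtr // dotvv_ge0. Qed.

Lemma dotv_subZ x y k :
  dotv (x - k *: y) (x - k *: y) = dotv x x - 2 * k * dotv x y + k ^+ 2 * dotv y y.
Proof.
rewrite /dotv !mulr_sumr -sumrB -big_split /=.
by apply: eq_bigr => i _; rewrite !mxE; ring.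
Qed.

Lemma sqr_enorm_subZ x y k :
  enorm (x - k *: y) ^+ 2 = enorm x ^+ 2 - 2 * k * dotv x y + k ^+ 2 * enorm y ^+ 2.
Proof. by rewrite !sqr_enorm dotv_subZ. Qed.

Lemma tangent_ball_power x y r : enorm y = 1 ->
  enorm (x - (1 - r) *: y) ^+ 2 - r ^+ 2
  = (1 - r) * enorm (x - y) ^+ 2 - r * (1 - enorm x ^+ 2).
Proof.
move=> y1; rewrite -{2}[y]scale1r !sqr_enorm_subZ y1; ring.
Qed.

Lemma in_tangent_ballE x y r : enorm y = 1 -> 0 <= r ->
  in_open_ball ((1 - r) *: y) r x <-> (1 - r) * enorm (x - y) ^+ 2 < r * (1 - enorm x ^+ 2).
Proof.
move=> y1 r0; rewrite /in_open_ball -ltr_sqr ?nnegE //; last exact: enorm_ge0.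
by rewrite -subr_lt0 tangent_ball_power // subr_lt0.
Qed.

End EuclideanNorm.

Lemma ler_pdivl_sqrt (R : rcfType) (a b K : R) :
  0 <= a -> 0 < b -> a ^+ 2 <= K * b ^+ 2 -> a / b <= Num.sqrt K.
Proof.
move=> a0 b0 le_ab; rewrite ler_pdivrMr //.
rewrite -(ger0_norm a0) -(gtr0_norm b0) -!sqrtr_sqr mulrC -sqrtrM ?sqr_ge0 //.
have Kb_ge0 : 0 <= K * b ^+ 2 := le_trans (sqr_ge0 a) le_ab.
by rewrite mulrC ler_sqrt.
Qed.

Lemma tangent_power_ratio (R : realFieldType) (r1 r2 s p q : R) :
  0 < r1 < 1 -> 0 < r2 ->
  (1 - r1) * p < r1 * s -> r2 * s <= (1 - r2) * q ->
  p <= r1 / r2 * ((1 - r2) / (1 - r1)) * q.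
Proof.
move=> /andP[r1_gt0 r1_lt1] r2_gt0 in1 out2.
have -> : r1 / r2 * ((1 - r2) / (1 - r1)) * q = r1 * ((1 - r2) * q) / (r2 * (1 - r1)).
  by field; apply/andP; split; lra.
rewrite ler_pdivlMr ?mulr_gt0 ?subr_gt0 //.
have in1' : r2 * ((1 - r1) * p) <= r2 * (r1 * s) by rewrite ler_pM2l // ltW.
have out2' : r1 * (r2 * s) <= r1 * ((1 - r2) * q) by rewrite ler_pM2l.
nra.
Qed.

Theorem lemma2p3 (R : rcfType) (d : nat) (hd : (2 <= d)%N)
  (y1 y2 x : 'rV[R]_d) (r1 r2 : R)
  (hy1 : enorm y1 = 1) (hy2 : enorm y2 = 1)
  (hr1 : 0 < r1) (hr1' : r1 < 1 / 2) (hr2 : 0 < r2) (hr2' : r2 < 1 / 2)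
  (hx1 : in_open_ball ((1 - r1) *: y1) r1 x)
  (hx2 : ~ in_open_ball ((1 - r2) *: y2) r2 x) :
  enorm (x - y1) / enorm (x - y2) <= Num.sqrt (r1 / r2 * ((1 - r2) / (1 - r1))).
Proof.
move/(in_tangent_ballE x _ _ hy1 (ltW hr1)): hx1 => in1.
have out2 : r2 * (1 - enorm x ^+ 2) <= (1 - r2) * enorm (x - y2) ^+ 2.
  by rewrite leNgt; apply/negP => /(in_tangent_ballE x _ _ hy2 (ltW hr2)).
have s_gt0 : 0 < 1 - enorm x ^+ 2.
  rewrite -(pmulr_rgt0 _ hr1); apply: le_lt_trans in1.
  by rewrite mulr_ge0 ?sqr_ge0 // subr_ge0; lra.
have m2_gt0 : 0 < enorm (x - y2).
  rewrite lt_def enorm_ge0 andbT; apply: contraTneq out2 => ->.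
  by rewrite expr0n mulr0 -ltNge mulr_gt0.
apply: ler_pdivl_sqrt; rewrite ?enorm_ge0 //.
by apply: tangent_power_ratio in1 out2 => //; apply/andP; split; lra.
Qed.
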